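(* For each positive integer $k$, let $z_k$ be the optimal value of the program \[ \max \frac{\sum_{j=1}^k \alpha_j}{f+\sum_{j=1}^k d_j}\ \text{ s.t. } \alpha_j\le\alpha_{j+1}\ (1\le j<k);\ \sqrt{\alpha_j}\le\sqrt{\alpha_l}+\sqrt{d_j}+\sqrt{d_l}\ (1\le j,l\le k);\ \sum_{l=j}^k\max(\alpha_j-d_l,0)\le f\ (1\le j\le k);\ \alpha_j,d_j,f\ge0. \] Then $\sup_{k \ge 1} z_k \ge 2.86$.
   Context: The maximum is taken over feasible points with $f+\sum_j d_j>0$. *)

From HB Require Import structures.
From mathcomp Require Import all_boot all_order all_algebra.
From mathcomp Require Import all_classical all_reals.
From mathcomp Require Import ereal.
Set Implicit Arguments. Unset Strict Implicit. Unset Printing Implicit Defensive.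
Import Order.TTheory GRing.Theory Num.Theory.
Local Open Scope ring_scope.
Local Open Scope classical_set_scope.

(* Variables alpha_1..alpha_k, d_1..d_k are the values a 1..a k, d 1..d k
   of sequences a d : nat -> R (values outside 1..k are irrelevant). *)
Definition feasible (R : realType) (k : nat) (a d : nat -> R) (f : R) : Prop :=
  [/\ (forall j : nat, (1 <= j < k)%N -> a j <= a j.+1),
      (forall j l : nat, (1 <= j <= k)%N -> (1 <= l <= k)%N ->
          Num.sqrt (a j) <= Num.sqrt (a l) + Num.sqrt (d j) + Num.sqrt (d l)),
      (forall j : nat, (1 <= j <= k)%N ->
          \sum_(j <= l < k.+1) Num.max (a j - d l) 0 <= f),
      (forall j : nat, (1 <= j <= k)%N -> 0 <= a j /\ 0 <= d j)
    & 0 <= f].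

Definition objective (R : realType) (k : nat) (a d : nat -> R) (f : R) : R :=
  (\sum_(1 <= j < k.+1) a j) / (f + \sum_(1 <= j < k.+1) d j).

Definition zval (R : realType) (k : nat) : \bar R :=
  ereal_sup [set x : \bar R | exists (a d : nat -> R) (f : R),
     [/\ feasible k a d f, 0 < f + \sum_(1 <= j < k.+1) d j
        & x = (objective k a d f)%:E]].

From Stdlib Require Import ZArith.
From HB Require Import structures.
From mathcomp Require Import all_boot all_order all_algebra.
From mathcomp Require Import all_classical all_reals ereal.
From mathcomp Require Import ssrZ lra.
Import Order.TTheory GRing.Theory Num.Theory.
Local Open Scope ring_scope.
Local Open Scope classical_set_scope.

(* For a profile 0 <= x_1 <= ... <= x_k, the point alpha_j = x_j^2,
   d_j = (1 - x_j)^2 satisfies the square-root constraints by the triangle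
   inequality, since they read x_j <= x_l + |1 - x_j| + |1 - x_l|.  The
   remaining constraints and the objective are invariant under
   (x, f) |-> (Q x, Q^2 f), so an integer profile p_j = Q x_j with k = 700 and
   Q = 10^6 can be checked by exact integer computation to give an objective
   of at least 2.86. *)

Lemma big_drop_nth {R T : Type} {idx : R} {op : R -> R -> R} (x0 : T)
    (F : T -> R) (s : seq T) (m : nat) :
  \big[op/idx]_(m <= i < size s) F (nth x0 s i) = \big[op/idx]_(y <- drop m s) F y.
Proof.
rewrite [RHS](big_nth x0) size_drop -[m in LHS]add0n big_addn.
by apply: eq_bigr => i _; rewrite nth_drop addnC.
Qed.

Section SquareProfile.
Context {R : realType}.

Lemma feasible_sqr_profile (k : nat) (x : nat -> R) (f : R) :
  (forall j, (1 <= j <= k)%N -> 0 <= x j) ->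
  (forall j, (1 <= j < k)%N -> x j <= x j.+1) ->
  (forall j, (1 <= j <= k)%N ->
     \sum_(j <= l < k.+1) Num.max (x j ^+ 2 - (1 - x l) ^+ 2) 0 <= f) ->
  0 <= f ->
  feasible k (fun j => x j ^+ 2) (fun j => (1 - x j) ^+ 2) f.
Proof.
move=> x_ge0 x_mono rows f_ge0; split => //.
- move=> j /andP[j_ge1 lt_jk].
  have xj_ge0 : 0 <= x j by apply: x_ge0; rewrite j_ge1 ltnW.
  have xSj_ge0 : 0 <= x j.+1 by apply: x_ge0; rewrite lt_jk.
  by rewrite ler_sqr ?nnegrE // x_mono // j_ge1.
- move=> j l hj hl.
  rewrite !sqrtr_sqr (ger0_norm (x_ge0 _ hj)) (ger0_norm (x_ge0 _ hl)).
  have := ler_norm (1 - x l); have := ler_norm (x j - 1).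
  rewrite distrC; lra.
- by move=> j _; rewrite !sqr_ge0.
Qed.

Lemma objective_le_sup_zval {k : nat} {a d : nat -> R} {f : R} :
  (0 < k)%N -> feasible k a d f -> 0 < f + \sum_(1 <= j < k.+1) d j ->
  ((objective k a d f)%:E <=
     ereal_sup [set zval R n | n in [set n : nat | (0 < n)%N]])%E.
Proof.
move=> k_gt0 feas pos; apply: (@le_trans _ _ (zval R k)).
  by apply: ereal_sup_ubound; exists a, d, f.
by apply: ereal_sup_ubound; exists k.
Qed.

End SquareProfile.

Definition zR (R : numDomainType) : Z -> R := intr \o int_of_Z.
HB.instance Definition _ (R : numDomainType) := GRing.RMorphism.on (zR R).

Section IntegerEmbedding.
Variable R : numDomainType.

Lemma zR_ge0 (z : Z) : 0 <= z -> 0 <= zR R z.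
Proof. by case: z => [|p|p]; rewrite /zR /= ?ler0z. Qed.

Lemma zR_gt0 (z : Z) : 0 < z -> 0 < zR R z.
Proof.
rewrite !lt_def => /andP[z_neq0 /zR_ge0->]; rewrite andbT /zR /= intr_eq0.
by rewrite -(rmorph0 int_of_Z) (can_eq int_of_ZK).
Qed.

Lemma zR_le (a b : Z) : a <= b -> zR R a <= zR R b.
Proof. by move=> le_ab; rewrite -subr_ge0 -rmorphB zR_ge0 // subr_ge0. Qed.

Lemma zR_max (a b : Z) : zR R (Num.max a b) = Num.max (zR R a) (zR R b).
Proof.
case: (leP a b) => [le_ab|/ltW le_ba].
  by rewrite !max_r ?zR_le.
by rewrite !max_l ?zR_le.
Qed.

End IntegerEmbedding.

Definition row_excess (Q p : Z) (t : seq Z) : Z :=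
  \sum_(q <- t) Num.max (p ^+ 2 - (Q - q) ^+ 2) 0.

(* [s = [:: p_1; ...; p_k]] encodes x_j = p_j / Q and f = F / Q^2; [row_excess]
   is Q^2 times the left-hand side of the j-th budget constraint. *)
Definition profile_certificate (Q F : Z) (s : seq Z) : bool :=
  [&& 0 < Q, 0 < F, all (fun q => 0 <= q) s, sorted <=%R s &
      all (fun j => row_excess Q (nth 0 s j) (drop j s) <= F) (iota 0 (size s))].

Section ScaledProfile.
Context {R : realType} {Q F : Z} {s : seq Z} (cert : profile_certificate Q F s).

Definition scaled_profile (j : nat) : R := zR R (nth 0 s j.-1) / zR R Q.

Local Notation x := scaled_profile.
Local Notation k := (size s).
Local Notation c := (zR R Q).

Let c_gt0 : 0 < c. Proof. by case/and5P: cert => /(zR_gt0 R). Qed.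

Lemma scaled_profile_ge0 (j : nat) : (1 <= j <= k)%N -> 0 <= x j.
Proof.
case: j => // j /andP[_ lt_jk]; rewrite divr_ge0 ?(ltW c_gt0) // zR_ge0 //.
by case/and5P: cert => _ _ /allP s_ge0 _ _; apply: s_ge0; rewrite mem_nth.
Qed.

Lemma scaled_profile_mono (j : nat) : (1 <= j < k)%N -> x j <= x j.+1.
Proof.
case: j => // j /andP[_ lt_jk]; rewrite ler_pM2r ?invr_gt0 // zR_le //.
by case/and5P: cert => _ _ _ /(sortedP 0) s_sorted _; apply: s_sorted.
Qed.

Lemma scaled_sqr (q : Z) : (zR R q / c) ^+ 2 = zR R (q ^+ 2) / c ^+ 2.
Proof. by rewrite rmorphXn expr_div_n. Qed.

Lemma scaled_sqr_compl (q : Z) : (1 - zR R q / c) ^+ 2 = zR R ((Q - q) ^+ 2) / c ^+ 2.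
Proof. by rewrite rmorphXn rmorphB -expr_div_n mulrBl divff ?gt_eqF. Qed.

Lemma scaled_excess (p q : Z) :
  Num.max ((zR R p / c) ^+ 2 - (1 - zR R q / c) ^+ 2) 0 =
  zR R (Num.max (p ^+ 2 - (Q - q) ^+ 2) 0) / c ^+ 2.
Proof.
rewrite scaled_sqr scaled_sqr_compl -mulrBl -rmorphB zR_max rmorph0.
by rewrite maxr_pMl ?mul0r // invr_ge0 exprn_ge0 // ltW.
Qed.

Lemma zR_sum_scaled (h : Z -> Z) (t : seq Z) :
  \sum_(q <- t) zR R (h q) / c ^+ 2 = zR R (\sum_(q <- t) h q) / c ^+ 2.
Proof. by rewrite rmorph_sum mulr_suml. Qed.

Lemma scaled_row (j : nat) : (1 <= j <= k)%N ->
  \sum_(j <= l < k.+1) Num.max (x j ^+ 2 - (1 - x l) ^+ 2) 0 =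
  zR R (row_excess Q (nth 0 s j.-1) (drop j.-1 s)) / c ^+ 2.
Proof.
case: j => // j _; rewrite big_add1 /= -zR_sum_scaled -(big_drop_nth 0).
by apply: eq_bigr => l _; rewrite scaled_excess.
Qed.

Lemma scaled_feasible :
  feasible k (fun j => x j ^+ 2) (fun j => (1 - x j) ^+ 2) (zR R F / c ^+ 2).
Proof.
case/and5P: cert => _ F_gt0 _ _ /allP rows.
apply: feasible_sqr_profile; [exact: scaled_profile_ge0|exact: scaled_profile_mono| |].
- case=> // j /andP[_ le_jk]; rewrite scaled_row // ler_pM2r ?invr_gt0 ?exprn_gt0 //.
  by rewrite zR_le // rows // mem_iota.
- by rewrite divr_ge0 ?exprn_ge0 ?(ltW c_gt0) // zR_ge0 // ltW.
Qed.

Lemma sum_scaled_profile (g : R -> R) (h : Z -> Z) :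
  (forall q, g (zR R q / c) = zR R (h q) / c ^+ 2) ->
  \sum_(1 <= j < k.+1) g (x j) = zR R (\sum_(q <- s) h q) / c ^+ 2.
Proof.
move=> gh; rewrite big_add1 -zR_sum_scaled [RHS](big_nth 0).
by apply: eq_bigr => j _; rewrite gh.
Qed.

Lemma scaled_total_cost :
  zR R F / c ^+ 2 + \sum_(1 <= j < k.+1) (1 - x j) ^+ 2 =
  zR R (F + \sum_(q <- s) (Q - q) ^+ 2) / c ^+ 2.
Proof.
rewrite (sum_scaled_profile (fun y => (1 - y) ^+ 2) (fun q => (Q - q) ^+ 2)
  scaled_sqr_compl).
by rewrite -mulrDl -rmorphD.
Qed.

Lemma total_cost_gt0 : 0 < F + \sum_(q <- s) (Q - q) ^+ 2.
Proof.
case/and5P: cert => _ F_gt0 _ _ _.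
by rewrite ltr_wpDr // sumr_ge0 // => q _; rewrite sqr_ge0.
Qed.

Lemma scaled_total_cost_gt0 :
  0 < zR R F / c ^+ 2 + \sum_(1 <= j < k.+1) (1 - x j) ^+ 2.
Proof. by rewrite scaled_total_cost divr_gt0 ?exprn_gt0 // zR_gt0 ?total_cost_gt0. Qed.

Lemma scaled_objective :
  objective k (fun j => x j ^+ 2) (fun j => (1 - x j) ^+ 2) (zR R F / c ^+ 2) =
  zR R (\sum_(q <- s) q ^+ 2) / zR R (F + \sum_(q <- s) (Q - q) ^+ 2).
Proof.
rewrite /objective scaled_total_cost.
rewrite (sum_scaled_profile (fun y => y ^+ 2) (fun q => q ^+ 2) scaled_sqr).
by rewrite invf_div mulrA divfK // expf_neq0 // gt_eqF.
Qed.

End ScaledProfile.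

Theorem sup_zval_ge_certificate (R : realType) (Q F : Z) (s : seq Z) (m n : nat) :
  profile_certificate Q F s -> s != [::] -> (0 < n)%N ->
  m%:R * (F + \sum_(q <- s) (Q - q) ^+ 2) <= n%:R * \sum_(q <- s) q ^+ 2 ->
  ((m%:R / n%:R : R)%:E <=
     ereal_sup [set zval R k | k in [set k : nat | (0 < k)%N]])%E.
Proof.
move=> cert s_neq0 n_gt0 ratio.
have k_gt0 : (0 < size s)%N by rewrite lt0n size_eq0.
apply: le_trans _ (objective_le_sup_zval k_gt0 (scaled_feasible cert)
                  (scaled_total_cost_gt0 cert)).
rewrite scaled_objective // lee_fin.
have cost_gt0 := zR_gt0 R _ (total_cost_gt0 cert).
rewrite ler_pdivlMr // mulrAC ler_pdivrMr ?ltr0n //.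
rewrite -(rmorph_nat (zR R) m) -(rmorph_nat (zR R) n) -!rmorphM zR_le //.
by rewrite [_ * n%:R]mulrC.
Qed.

Local Open Scope Z_scope.

(* A numerically optimized profile for k = 700, at scale [witness_scale]. *)
Definition witness_profile : seq Z := [::
  629513; 629864; 630215; 630568; 630923; 631278; 631635; 631993; 632352; 632713;
  633075; 633438; 633803; 634170; 634538; 634907; 635278; 635650; 636023; 636399;
  636775; 637153; 637532; 637912; 638294; 638678; 639063; 639449; 639837; 640226;
  640617; 641010; 641404; 641800; 642197; 642596; 642996; 643398; 643801; 644206;
  644612; 645020; 645429; 645840; 646253; 646667; 647083; 647501; 647920; 648341;
  648764; 649189; 649615; 650042; 650471; 650902; 651334; 651768; 652204; 652642;
  653081; 653523; 653966; 654411; 654857; 655306; 655756; 656209; 656662; 657117;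
  657574; 658033; 658494; 658957; 659421; 659888; 660356; 660827; 661299; 661773;
  662250; 662728; 663208; 663689; 664172; 664658; 665145; 665635; 666127; 666620;
  667116; 667614; 668114; 668616; 669120; 669626; 670133; 670643; 671155; 671669;
  672185; 672703; 673224; 673746; 674271; 674799; 675328; 675860; 676393; 676929;
  677466; 678006; 678548; 679093; 679640; 680189; 680741; 681295; 681851; 682410;
  682971; 683534; 684099; 684666; 685236; 685809; 686384; 686961; 687541; 688124;
  688709; 689297; 689886; 690478; 691072; 691669; 692269; 692871; 693476; 694083;
  694694; 695307; 695922; 696541; 697160; 697783; 698409; 699037; 699668; 700302;
  700938; 701578; 702221; 702866; 703514; 704164; 704816; 705472; 706131; 706792;
  707457; 708125; 708795; 709469; 710146; 710825; 711507; 712191; 712879; 713570;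
  714264; 714961; 715662; 716366; 717073; 717782; 718494; 719209; 719928; 720650;
  721375; 722104; 722835; 723571; 724310; 725051; 725795; 726543; 727294; 728048;
  728806; 729568; 730333; 731102; 731874; 732649; 733427; 734209; 734994; 735783;
  736576; 737372; 738173; 738977; 739784; 740594; 741408; 742225; 743047; 743873;
  744702; 745536; 746373; 747214; 748058; 748905; 749757; 750613; 751473; 752337;
  753206; 754078; 754954; 755833; 756716; 757604; 758496; 759392; 760293; 761198;
  762108; 763020; 763936; 764857; 765782; 766712; 767647; 768586; 769530; 770477;
  771428; 772384; 773344; 774309; 775279; 776254; 777234; 778217; 779204; 780196;
  781193; 782195; 783202; 784215; 785232; 786253; 787278; 788308; 789344; 790384;
  791430; 792482; 793539; 794599; 795664; 796734; 797810; 798891; 799978; 801070;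
  802168; 803269; 804375; 805487; 806605; 807729; 808859; 809995; 811134; 812278;
  813428; 814585; 815747; 816916; 818090; 819270; 820454; 821643; 822840; 824042;
  825251; 826467; 827688; 828913; 830144; 831382; 832627; 833878; 835136; 836400;
  837668; 838942; 840224; 841512; 842808; 844111; 845418; 846731; 848051; 849378;
  850712; 852054; 853403; 854756; 856116; 857483; 858858; 860240; 861630; 863027;
  864428; 865836; 867253; 868678; 870110; 871551; 872995; 874447; 875908; 877376;
  878853; 880338; 881829; 883326; 884831; 886345; 887868; 889400; 890938; 892481;
  894034; 895596; 897166; 898746; 900333; 901925; 903527; 905137; 906758; 908388;
  910025; 911668; 913320; 914983; 916655; 918337; 920026; 921721; 923427; 925143;
  926869; 928605; 930348; 932098; 933859; 935631; 937413; 939206; 941004; 942811;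
  944630; 946460; 948301; 950151; 952007; 953875; 955753; 957644; 959546; 961454;
  963372; 965302; 967244; 969197; 971162; 973132; 975114; 977109; 979117; 981136;
  983162; 985199; 987249; 989312; 991388; 993473; 995567; 997674; 999794; 1001928;
  1004074; 1006227; 1008393; 1010573; 1012767; 1014976; 1017189; 1019417; 1021659; 1023916;
  1026187; 1028465; 1030756; 1033063; 1035385; 1037722; 1040066; 1042424; 1044797; 1047186;
  1049591; 1052005; 1054431; 1056874; 1059333; 1061809; 1064293; 1066791; 1069306; 1071838;
  1074388; 1076944; 1079517; 1082107; 1084715; 1087342; 1089974; 1092624; 1095292; 1097980;
  1100683; 1103395; 1106126; 1108876; 1111217; 1113372; 1115539; 1117717; 1119908; 1122111;
  1124327; 1126555; 1128795; 1131048; 1133314; 1135593; 1137884; 1140189; 1142506; 1144838;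
  1147182; 1149540; 1151912; 1154297; 1156697; 1159110; 1161538; 1163979; 1166435; 1168906;
  1171392; 1173892; 1176407; 1178937; 1181483; 1184043; 1186620; 1189212; 1191819; 1194443;
  1197083; 1199739; 1202411; 1205100; 1207806; 1210529; 1213268; 1216025; 1218800; 1221592;
  1224401; 1227229; 1230074; 1232938; 1235821; 1238722; 1241642; 1244580; 1247539; 1250516;
  1253513; 1256531; 1259568; 1262625; 1265703; 1268802; 1271921; 1275062; 1278224; 1281407;
  1284613; 1287840; 1291090; 1294363; 1297658; 1300977; 1304318; 1307684; 1311073; 1314486;
  1317924; 1321387; 1324874; 1328387; 1331926; 1335490; 1339081; 1342698; 1346342; 1350013;
  1353712; 1357438; 1361193; 1364976; 1368788; 1372630; 1376501; 1380401; 1384333; 1388295;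
  1392288; 1396313; 1400370; 1404459; 1408581; 1412737; 1416926; 1421149; 1425407; 1429700;
  1434029; 1438393; 1442795; 1447233; 1451709; 1456223; 1460776; 1465368; 1470000; 1474673;
  1479386; 1484142; 1488939; 1493779; 1498663; 1503591; 1508564; 1513582; 1518647; 1523759;
  1528918; 1534126; 1539383; 1544691; 1550049; 1555459; 1560921; 1566437; 1572008; 1577634;
  1583316; 1589055; 1594852; 1600709; 1606626; 1612604; 1618645; 1624750; 1630919; 1637154;
  1643456; 1649827; 1656268; 1662779; 1669363; 1676021; 1682755; 1689565; 1696454; 1703422;
  1710472; 1717606; 1724824; 1732129; 1739523; 1747008; 1754585; 1762257; 1770025; 1777893;
  1785861; 1793933; 1802111; 1810397; 1818794; 1827304; 1835931; 1844678; 1853546; 1862539;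
  1871661; 1880915; 1890304; 1899832; 1909502; 1919319; 1929287; 1939408; 1949689; 1960134;
  1970747; 1981533; 1992498; 2003647; 2014985; 2026519; 2038255; 2050199; 2062359; 2074741;
  2087352; 2100202; 2109750; 2109750; 2109750; 2109750; 2109750; 2109750; 2109750; 2109750;
  2109750; 2109750; 2109750; 2109750; 2109750; 2109750; 2109750; 2109750; 2109750; 2109750;
  2109750; 2109750; 2109750; 2109750; 2109750; 2109750; 2109750; 2109750; 2109750; 2109750;
  2109750; 2109750; 2109750; 2109750; 2109750; 2109750; 2109750; 2109750; 2109750; 2109750;
  2109750; 2109750; 2109750; 2109750; 2109750; 2109750; 2109750; 2109750; 2109750; 2109750;
  2109750; 2109750; 2109750; 2109750; 2109750; 2109750; 2109750; 2109750; 2109750; 2109750].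

Definition witness_scale : Z := 1000000.
Definition witness_cost : Z := 187600359327734.

Local Close Scope Z_scope.

Theorem lemma6 (R : realType) :
  ((286%:R / 100%:R : R)%:E <= ereal_sup [set zval R k | k in [set k : nat | (0 < k)%N]])%E.
Proof.
apply: (@sup_zval_ge_certificate R witness_scale witness_cost witness_profile) => //.
(* Big operators are locked; [unlock] exposes them to [vm_compute]. *)
- by rewrite /profile_certificate /row_excess unlock; vm_compute.
- by rewrite unlock; vm_compute.
Qed.
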